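(* For all integers $n\geq 2$ and $m\geq 1$, $\mathrm{mbt}(K_{2n}\Box C_{2m+1})=\Delta(K_{2n}\Box C_{2m+1})+1=2n+2$.
   Context: A book embedding of a graph $G$ consists of a linear ordering of $V(G)$ (the vertices placed on the spine) together with an assignment of each edge to one of a set of pages such that no two edges on the same page cross, i.e. there are no two edges $uv$, $xy$ on the same page with $u<x<v<y$ in the ordering. A book embedding is matching if on every page each vertex is incident with at most one edge of that page. The matching book thickness $\mathrm{mbt}(G)$ is the minimum number of pages over all matching book embeddings of $G$. $\Delta(G)$ denotes the maximum degree of $G$. $K_r$ is the complete graph on $r$ vertices, $C_s$ the cycle on $s$ vertices. The Cartesian product $G\Box B$ has vertex set $V(G)\times V(B)$, with $(u_1,v_1)$ adjacent to $(u_2,v_2)$ iff either $u_1=u_2$ and $v_1v_2\in E(B)$, or $v_1=v_2$ and $u_1u_2\in E(G)$. *)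

(* Simple graphs are symmetric irreflexive relations on a finType. *)
From mathcomp Require Import all_boot.
Set Implicit Arguments. Unset Strict Implicit. Unset Printing Implicit Defensive.

Definition complete_rel (r : nat) : rel 'I_r := fun u v => u != v.

Definition cycle_rel (s : nat) : rel 'I_s :=
  fun i j => (j == (i.+1 %% s) :> nat) || (i == (j.+1 %% s) :> nat).

Definition cart_rel (T1 T2 : finType) (g : rel T1) (b : rel T2) : rel (T1 * T2) :=
  fun x y => ((x.1 == y.1) && b x.2 y.2) || ((x.2 == y.2) && g x.1 y.1).

Definition deg (V : finType) (e : rel V) (v : V) : nat := #|[set w | e v w]|.
Definition max_deg (V : finType) (e : rel V) : nat := \max_(v : V) deg e v.

(* A matching book embedding of e with k pages: a linear ordering of the
   vertices (injective position map pos into nat) and a page assignment pg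
   to each edge (given on ordered pairs, required symmetric on edges). *)
Definition matching_book_embedding (V : finType) (e : rel V) (k : nat)
    (pos : V -> nat) (pg : V -> V -> 'I_k) : Prop :=
  injective pos /\
  (forall u v, e u v -> pg u v = pg v u) /\
  (forall u v x y, e u v -> e x y -> pg u v = pg x y ->
     ~ [/\ pos u < pos x, pos x < pos v & pos v < pos y]) /\
  (forall u v w, e u v -> e u w -> pg u v = pg u w -> v = w).

Definition has_mbe (V : finType) (e : rel V) (k : nat) : Prop :=
  exists (pos : V -> nat) (pg : V -> V -> 'I_k), @matching_book_embedding V e k pos pg.

Definition is_mbt (V : finType) (e : rel V) (k : nat) : Prop :=
  has_mbe e k /\ (forall j, has_mbe e j -> k <= j).

From mathcomp Require Import all_boot zify.
Set Implicit Arguments. Unset Strict Implicit. Unset Printing Implicit Defensive.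

(* A matching book embedding has at least Delta pages.  With exactly Delta pages on a
   Delta-regular graph every vertex meets every page, so the page of an edge uv matches the
   vertices strictly between u and v among themselves; hence the parity of the number of
   vertices left of a vertex is a proper 2-colouring, which rules out triangles.

   Conversely, K_N x C_{2m+1} embeds in N + 2 pages: chords with equal sums modulo M never
   cross, so the chords {a, b} of the copies of K_N are paged by a + b modulo N + 1 in the
   two end copies and modulo N in the others; the rungs between consecutive copies alternate
   between the two remaining pages and are nested because the copies alternate direction;
   the wrap edge of fiber a reuses a page that the end copies leave free at a. *)

Lemma involution_card_even (T : finType) (S : {set T}) (f : T -> T) :
  {in S, forall x, [/\ f x \in S, f x != x & f (f x) = x]} -> ~~ odd #|S|.
Proof.
have [s] := ubnP #|S|; elim: s S => // s IH S /ltnSE le_Ss fS.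
have [-> | [x xS]] := set_0Vmem S; first by rewrite cards0.
have [fxS fx_neq ffx] := fS x xS.
set S' := S :\ x :\ f x.
have cardS : #|S| = #|S'|.+2.
  by rewrite (cardsD1 x) xS (cardsD1 (f x) (S :\ x)) !inE fx_neq fxS.
suff : ~~ odd #|S'| by rewrite cardS /= negbK.
apply: IH; first by rewrite cardS in le_Ss; lia.
move=> y; rewrite !inE => /and3P[yfx yx yS]; have [fyS fy_neq ffy] := fS y yS.
split=> //; rewrite fyS andbT; apply/andP; split.
- by apply: contra yx => /eqP fyfx; rewrite -ffy fyfx ffx.
- by apply: contra yfx => /eqP fyx; rewrite -ffy fyx.
Qed.

Lemma mbe_deg_le (V : finType) (e : rel V) k : has_mbe e k -> forall v, deg e v <= k.
Proof.
case=> pos [pg [_ [_ [_ pg_match]]]] v.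
rewrite /deg -(card_in_imset (f := pg v)) => [|w w']; last by rewrite !inE; apply: pg_match.
by apply: leq_trans (max_card _) _; rewrite card_ord.
Qed.

Lemma max_deg_regular (V : finType) (e : rel V) d (v0 : V) :
  (forall v, deg e v = d) -> max_deg e = d.
Proof.
move=> e_reg; apply/eqP; rewrite eqn_leq; apply/andP; split.
  by apply/bigmax_leqP => v _; rewrite e_reg.
by rewrite -(e_reg v0) leq_bigmax.
Qed.

Section RegularMatchingBook.

Variables (V : finType) (e : rel V) (k : nat) (pos : V -> nat) (pg : V -> V -> 'I_k).
Hypotheses (e_sym : symmetric e) (e_irr : irreflexive e) (e_reg : forall v, deg e v = k).
Hypothesis emb : @matching_book_embedding V e k pos pg.

Let pos_inj : injective pos. Proof. by case: emb. Qed.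
Let pg_sym u v : e u v -> pg u v = pg v u. Proof. by case: emb => _ [+ _]; apply. Qed.
Let pg_nocross u v x y : e u v -> e x y -> pg u v = pg x y ->
  ~ [/\ pos u < pos x, pos x < pos v & pos v < pos y].
Proof. by case: emb => _ [_ [+ _]]; apply. Qed.
Let pg_match u v w : e u v -> e u w -> pg u v = pg u w -> v = w.
Proof. by case: emb => _ [_ [_]]; apply. Qed.

Lemma mbe_page_surj u (p : 'I_k) : exists2 w, e u w & pg u w = p.
Proof.
have pg_inj : {in [set w | e u w] &, injective (pg u)}.
  by move=> w w'; rewrite !inE; apply: pg_match.
have : p \in pg u @: [set w | e u w].
  suff -> : pg u @: [set w | e u w] = setT by rewrite inE.
  apply/eqP; rewrite eqEcard subsetT cardsT card_ord card_in_imset //.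
  by rewrite -[#|_|]/(deg e u) e_reg leqnn.
by case/imsetP => w; rewrite inE => euw ->; exists w.
Qed.

Lemma mbe_between_even u v : e u v -> pos u < pos v ->
  ~~ odd #|[set w | pos u < pos w < pos v]|.
Proof.
move=> euv uv.
(* The page of [uv] matches the vertices strictly between [u] and [v] among themselves. *)
have [mate mate_e mate_pg] := fin_all_exists2 (fun w => mbe_page_surj w (pg u v)).
have mateK w : mate (mate w) = w.
  apply: (pg_match (mate_e (mate w))); first by rewrite e_sym mate_e.
  by rewrite mate_pg -(pg_sym (mate_e w)) mate_pg.
apply: (involution_card_even (f := mate)) => w; rewrite inE => /andP[uw wv].
have emw : e (mate w) w by rewrite e_sym mate_e.
have pmw : pg (mate w) w = pg u v by rewrite -(pg_sym (mate_e w)) mate_pg.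
split; last by rewrite mateK.
- rewrite inE; apply/andP; split.
  + case: ltngtP => // [mu | /pos_inj mu]; first by case: (pg_nocross emw euv pmw).
    subst u; suff wv_eq : w = v by rewrite wv_eq ltnn in wv.
    exact: pg_match emw euv pmw.
  + case: ltngtP => // [vm | /pos_inj mv].
      by case: (pg_nocross euv (mate_e w) (esym (mate_pg w))).
    subst v; suff wu_eq : w = u by rewrite wu_eq ltnn in uw.
    by apply: (pg_match emw); rewrite 1?e_sym // pmw pg_sym.
- by apply: contraTneq (mate_e w) => ->; rewrite e_irr.
Qed.

Lemma mbe_rank_parity u v : e u v ->
  odd #|[set z | pos z < pos u]| != odd #|[set z | pos z < pos v]|.
Proof.
wlog uv : u v / pos u < pos v => [wlog_uv euv|].
  case: (ltngtP (pos u) (pos v)) => [uv|vu|/pos_inj uv]; first exact: wlog_uv.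
    by rewrite eq_sym; apply: wlog_uv; rewrite // e_sym.
  by rewrite uv e_irr in euv.
move=> euv; set below := fun w => [set z | pos z < pos w].
have below_v : below v :\: below u = u |: [set w | pos u < pos w < pos v].
  apply/setP => z; rewrite !inE -(inj_eq pos_inj); lia.
have below_uv : below v :&: below u = below u.
  by apply/setP => z; rewrite !inE; lia.
rewrite -(cardsID (below u) (below v)) below_uv below_v cardsU1 inE ltnn /=.
by rewrite /below !oddD (negbTE (mbe_between_even euv uv)); case: odd.
Qed.

End RegularMatchingBook.

Lemma regular_mbe_triangle_free (V : finType) (e : rel V) k (x y z : V) :
  symmetric e -> irreflexive e -> (forall v, deg e v = k) -> has_mbe e k ->
  e x y -> e y z -> e z x -> False.
Proof.
move=> e_sym e_irr e_reg [pos [pg emb]] exy eyz ezx.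
have := mbe_rank_parity e_sym e_irr e_reg emb exy.
have := mbe_rank_parity e_sym e_irr e_reg emb eyz.
have := mbe_rank_parity e_sym e_irr e_reg emb ezx.
by do 3!case: odd.
Qed.

Lemma cross_sum_modn M x y z w : x < y -> y < z -> z < w -> w < M ->
  (x + z == y + w %[mod M]) = false.
Proof.
move=> xy yz zw wM.
have -> : y + w = x + z + (y + w - (x + z)) by lia.
rewrite -[in X in X == _](addn0 (x + z)) eqn_modDl mod0n modn_small; lia.
Qed.

Lemma eqn_modDl_small M a b c : b < M -> c < M -> (a + b == a + c %[mod M]) = (b == c).
Proof. by move=> bM cM; rewrite eqn_modDl !modn_small. Qed.

Section CliqueCycle.

Variables N m : nat.

(* Vertex [(a, i)] of the product is vertex [a] of the [i]-th copy of [K_N]; the copies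
   follow each other along the spine, every odd-numbered one in reverse order. *)
Definition copy_offset i a := if odd i then N.-1 - a else a.
Definition spine_pos a i := i * N + copy_offset i a.

Lemma copy_offset_lt i a : a < N -> copy_offset i a < N.
Proof. rewrite /copy_offset; case: odd; lia. Qed.

Lemma copy_offset_flip i a c : a < N -> c < N ->
  (copy_offset i.+1 a < copy_offset i.+1 c) = (copy_offset i c < copy_offset i a).
Proof. rewrite /copy_offset /=; case: odd => /=; lia. Qed.

Lemma spine_pos_lt a i b j : a < N -> b < N ->
  (spine_pos a i < spine_pos b j) = (i < j) || ((i == j) && (copy_offset i a < copy_offset i b)).
Proof.
move=> aN bN; have := copy_offset_lt i aN; have := copy_offset_lt j bN; rewrite /spine_pos.
case: (ltngtP i j) => [ij | ji | <-] /=; last by lia.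
- have : i.+1 * N <= j * N by rewrite leq_mul2r ij orbT.
  lia.
- have : j.+1 * N <= i * N by rewrite leq_mul2r ji orbT.
  lia.
Qed.

Lemma spine_pos_inj a i b j : a < N -> b < N -> spine_pos a i = spine_pos b j -> a = b /\ i = j.
Proof.
move=> aN bN eq_pos; have := spine_pos_lt i j aN bN; have := spine_pos_lt j i bN aN.
rewrite eq_pos ltnn; case: (ltngtP i j) => //= <- /esym/negbT + /esym/negbT.
by rewrite /copy_offset; case: odd; lia.
Qed.

Definition cyc_succ i := i.+1 %% (2 * m + 1).

Lemma cyc_succ_eq i : i <= 2 * m -> cyc_succ i = if i == 2 * m then 0 else i.+1.
Proof.
rewrite /cyc_succ addn1; case: eqP => [-> _ | i2m im]; first exact: modnn.
by rewrite modn_small //; lia.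
Qed.

Lemma cyc_succ_inj i j : i <= 2 * m -> j <= 2 * m -> cyc_succ i = cyc_succ j -> i = j.
Proof. by move=> im jm; rewrite !cyc_succ_eq //; do 2![case: eqP => ?]; lia. Qed.

Hypotheses (N_gt0 : 0 < N) (m_gt0 : 0 < m).

Lemma cyc_succ_neq i : i <= 2 * m -> (i == cyc_succ i) = false.
Proof. by move=> im; rewrite cyc_succ_eq //; case: ifP => /eqP; lia. Qed.

Lemma cyc_succ2_neq i : i <= 2 * m -> (i == cyc_succ (cyc_succ i)) = false.
Proof.
move=> im; rewrite (cyc_succ_eq im).
by case: ifP => /eqP i2m; rewrite cyc_succ_eq; try lia; case: ifP => /eqP; lia.
Qed.

Definition clique_mod i := if (i == 0) || (i == 2 * m) then N.+1 else N.

(* Pages [N.-1] and [N.+1]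
   carry the rungs, so the residue [N.-1] is moved out of the way in every copy that
   meets an odd rung (all copies but the first). *)
Definition clique_page i s :=
  if i == 0 then s %% N.+1
  else if i == 2 * m then (if s %% N.+1 == N.-1 then N.+1 else s %% N.+1)
  else if s %% N == N.-1 then N else s %% N.

(* Page of cycle edge [k] of fiber [a], joining copies [k] and [k + 1] modulo [2m + 1]: a
   rung for [k < 2m], the wrap edge for [k = 2m].  The wrap edge gets the page that copy [0]
   gives to a chord from [a] to a virtual vertex [N] placed right after the copy. *)
Definition cycle_page a k :=
  if k == 2 * m then clique_page 0 (a + N) else if odd k then N.-1 else N.+1.

Lemma clique_page_lt i s : clique_page i s < N.+2.
Proof.
have := ltn_pmod s (ltn0Sn N); have := ltn_pmod s N_gt0.
by rewrite /clique_page; do ![case: ifP => ? /=]; lia.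
Qed.

Lemma clique_page_eq_mod i s t : clique_page i s = clique_page i t ->
  s = t %[mod clique_mod i].
Proof.
have M_gt0 : 0 < clique_mod i by rewrite /clique_mod; case: ifP.
have := ltn_pmod s M_gt0; have := ltn_pmod t M_gt0.
rewrite /clique_page /clique_mod; do ![case: ifP => ? /=]; lia.
Qed.

Lemma wrap_modn a : a < N -> (a + N) %% N.+1 = if a == 0 then N else a.-1.
Proof.
case: eqP => [-> _ | a_neq0 aN]; first by rewrite modn_small.
by rewrite (_ : a + N = a.-1 + N.+1) ?modnDr ?modn_small; lia.
Qed.

Lemma wrap_page_eq a : a < N -> cycle_page a (2 * m) = if a == 0 then N else a.-1.
Proof. by move=> aN; rewrite /cycle_page eqxx /clique_page /clique_mod eqxx /= wrap_modn. Qed.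

Lemma wrap_page_clique i a : (i == 0) || (i == 2 * m) -> a < N ->
  cycle_page a (2 * m) = clique_page i (a + N).
Proof.
move=> i_end aN; rewrite wrap_page_eq // /clique_page wrap_modn //.
by do ![case: ifP => ? /=]; lia.
Qed.

Lemma clique_page_neq_rung i k a s : k < 2 * m -> (i == k) || (i == k.+1) ->
  clique_page i s != cycle_page a k.
Proof.
move=> km ik; have := ltn_pmod s (ltn0Sn N); have := ltn_pmod s N_gt0.
rewrite /clique_page /cycle_page /clique_mod; do ![case: ifP => ? /=]; lia.
Qed.

Lemma wrap_page_neq_clique i a b : (i == 0) || (i == 2 * m) -> a < N -> b < N ->
  clique_page i (a + b) != cycle_page a (2 * m).
Proof.
move=> i_end aN bN; rewrite (wrap_page_clique i_end aN).
apply/negP => /eqP /clique_page_eq_mod /eqP.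
by rewrite /clique_mod i_end eqn_modDl_small //; lia.
Qed.

Lemma clique_page_neq_incident a b i k : a < N -> b < N -> k <= 2 * m ->
  (i == k) || (i == cyc_succ k) -> clique_page i (a + b) != cycle_page a k.
Proof.
move=> aN bN km; rewrite cyc_succ_eq //; case: (eqVneq k (2 * m)) => [-> i_end | k2m ik].
  by apply: wrap_page_neq_clique; rewrite // orbC.
by apply: clique_page_neq_rung => //; lia.
Qed.

Lemma rung_page_neq_wrap k a b : k < 2 * m -> (k == 0) || (k.+1 == 2 * m) -> b < N ->
  cycle_page a k != cycle_page b (2 * m).
Proof.
move=> km k_end bN; rewrite wrap_page_eq // /cycle_page.
do ![case: ifP => ? /=]; lia.
Qed.

Lemma rung_page_neq_next a b k : k.+1 < 2 * m -> cycle_page a k != cycle_page b k.+1.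
Proof. rewrite /cycle_page; do ![case: ifP => ? /=]; lia. Qed.

Lemma cycle_page_succ_neq a k : a < N -> k <= 2 * m ->
  cycle_page a k != cycle_page a (cyc_succ k).
Proof.
move=> aN km; rewrite cyc_succ_eq //; case: (eqVneq k (2 * m)) => [-> | k2m].
  by rewrite eq_sym rung_page_neq_wrap //; lia.
have [k1 | k1] : k.+1 < 2 * m \/ k.+1 = 2 * m by lia.
  exact: rung_page_neq_next.
by rewrite k1 rung_page_neq_wrap ?k1 ?eqxx ?orbT //; lia.
Qed.

Lemma clique_chords_noncrossing i a b c d : a < N -> b < N -> c < N -> d < N ->
  copy_offset i a < copy_offset i c -> copy_offset i c < copy_offset i b ->
  copy_offset i b < copy_offset i d ->
  clique_page i (a + b) != clique_page i (c + d).
Proof.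
move=> aN bN cN dN ac cb bd; apply/negP => /eqP /clique_page_eq_mod /eqP.
have MN : N <= clique_mod i by rewrite /clique_mod; case: ifP.
move: ac cb bd; rewrite /copy_offset; case: odd => ac cb bd.
- by rewrite eq_sym [a + b]addnC [c + d]addnC cross_sum_modn //; lia.
- by rewrite cross_sum_modn //; lia.
Qed.

Lemma wrap_clique_noncrossing i x y z : (i == 0) || (i == 2 * m) ->
  x < y -> y < z -> z < N -> clique_page i (x + z) != cycle_page y (2 * m).
Proof.
move=> i_end xy yz zN; rewrite (wrap_page_clique i_end) 1?(ltn_trans yz) //.
apply/negP => /eqP /clique_page_eq_mod /eqP.
by rewrite /clique_mod i_end cross_sum_modn.
Qed.

(* The edges of the product with their pages, each listed from its left end on the spine. *)
Inductive spine_edge : nat -> nat -> nat -> nat -> nat -> Prop :=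
  | SpineClique a b i : a < N -> b < N -> copy_offset i a < copy_offset i b ->
      spine_edge a i b i (clique_page i (a + b))
  | SpineRung a i : a < N -> i < 2 * m -> spine_edge a i a i.+1 (cycle_page a i)
  | SpineWrap a : a < N -> spine_edge a 0 a (2 * m) (cycle_page a (2 * m)).

Lemma spine_edge_noncrossing a i b j p c k d l q :
  spine_edge a i b j p -> spine_edge c k d l q -> p = q ->
  spine_pos a i < spine_pos c k -> spine_pos c k < spine_pos b j ->
  spine_pos b j < spine_pos d l -> False.
Proof.
have copy_offset_end x : copy_offset (2 * m) x = x by rewrite /copy_offset oddM.
case=> {a i b j p} [a b i aN bN ab | a i aN im | a aN];
  case=> {c k d l q} [c d k cN dN cd | c k cN km | c cN] pq;
  rewrite !spine_pos_lt // => P1 P2 P3.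
- have ki : k = i by lia.
  subst k; suff : clique_page i (a + b) != clique_page i (c + d) by rewrite pq eqxx.
  by apply: clique_chords_noncrossing => //; lia.
- have ki : k = i by lia.
  subst k; suff : clique_page i (a + b) != cycle_page c i by rewrite pq eqxx.
  by apply: clique_page_neq_rung; rewrite ?eqxx.
- have i0 : i = 0 by lia.
  subst i; suff : clique_page 0 (a + b) != cycle_page c (2 * m) by rewrite pq eqxx.
  by move: P1 P2; rewrite /copy_offset /= => P1 P2; apply: wrap_clique_noncrossing => //; lia.
- have ki : k = i.+1 by lia.
  subst k; suff : clique_page i.+1 (c + d) != cycle_page a i by rewrite pq eqxx.
  by apply: clique_page_neq_rung; rewrite ?eqxx ?orbT.
- have [ki | ki] : k = i \/ k = i.+1 by lia.
  + by subst k; move: P3; rewrite copy_offset_flip //; lia.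
  + subst k; suff : cycle_page a i != cycle_page c i.+1 by rewrite pq eqxx.
    exact: rung_page_neq_next.
- have i0 : i = 0 by lia.
  subst i; suff : cycle_page a 0 != cycle_page c (2 * m) by rewrite pq eqxx.
  exact: rung_page_neq_wrap.
- have km : k = 2 * m by lia.
  subst k; suff : clique_page (2 * m) (c + d) != cycle_page a (2 * m) by rewrite pq eqxx.
  by move: P2 P3; rewrite !copy_offset_end => P2 P3; apply: wrap_clique_noncrossing; lia.
- have km' : k.+1 = 2 * m by lia.
  suff : cycle_page c k != cycle_page a (2 * m) by rewrite pq eqxx.
  by apply: rung_page_neq_wrap; rewrite ?km' ?eqxx ?orbT.
- by move: pq P1; rewrite !wrap_page_eq // /copy_offset /=; do 2![case: eqP]; lia.
Qed.

Definition adj (a i b j : nat) :=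
  (a == b) && ((j == cyc_succ i) || (i == cyc_succ j)) || (i == j) && (a != b).

Definition cycle_edge i j := if j == cyc_succ i then i else j.

Definition edge_page a i b j :=
  if i == j then clique_page i (a + b) else cycle_page a (cycle_edge i j).

Lemma edge_page_lt a i b j : edge_page a i b j < N.+2.
Proof.
rewrite /edge_page /cycle_page; case: ifP => _; first exact: clique_page_lt.
by do ![case: ifP => _]; rewrite ?clique_page_lt //; lia.
Qed.

Lemma edge_page_sym a i b j : i <= 2 * m -> j <= 2 * m ->
  adj a i b j -> edge_page a i b j = edge_page b j a i.
Proof.
move=> im jm; rewrite /adj /edge_page /cycle_edge [j == i]eq_sym.
case/orP=> [/andP[/eqP-> /orP[/eqP ji | /eqP ij]] | /andP[/eqP-> _]]; last by rewrite eqxx addnC.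
- by subst j; rewrite eqxx cyc_succ_neq // cyc_succ2_neq.
- by subst i; rewrite eqxx [cyc_succ j == j]eq_sym cyc_succ_neq // cyc_succ2_neq.
Qed.

Lemma adj_spine_edge a i b j : a < N -> b < N -> i <= 2 * m -> j <= 2 * m ->
  adj a i b j -> spine_pos a i < spine_pos b j -> spine_edge a i b j (edge_page a i b j).
Proof.
move=> aN bN im jm; rewrite spine_pos_lt // /adj /edge_page /cycle_edge.
case/orP=> [/andP[/eqP <- /orP[/eqP ji | /eqP ij]] | /andP[/eqP <- ab]] lt_ij.
- subst j; rewrite cyc_succ_neq // eqxx; move: lt_ij; rewrite cyc_succ_eq //.
  by case: eqP => [-> | i2m] lt_ij; [lia | apply: SpineRung; lia].
- subst i; rewrite [cyc_succ j == j]eq_sym cyc_succ_neq // cyc_succ2_neq //.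
  move: lt_ij; rewrite cyc_succ_eq //.
  by case: eqP => [-> _ | j2m lt_ij]; [apply: SpineWrap | lia].
- by rewrite eqxx; apply: SpineClique => //; move: lt_ij; rewrite eqxx ltnn.
Qed.

Lemma cycle_edge_incident i j : (j == cyc_succ i) || (i == cyc_succ j) ->
  (i == cycle_edge i j) || (i == cyc_succ (cycle_edge i j)).
Proof. by rewrite /cycle_edge; case: ifP => [_ | _ /= ->]; rewrite ?eqxx ?orbT. Qed.

Lemma cycle_page_match a i j k : a < N -> j <= 2 * m -> k <= 2 * m ->
  (j == cyc_succ i) || (i == cyc_succ j) -> (k == cyc_succ i) || (i == cyc_succ k) ->
  cycle_page a (cycle_edge i j) = cycle_page a (cycle_edge i k) -> j = k.
Proof.
move=> aN jm km; rewrite /cycle_edge.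
case/orP=> [/eqP-> | /eqP ->]; case/orP=> [/eqP-> | /eqP ik] //; rewrite ?eqxx.
- by subst i; rewrite cyc_succ2_neq // => /esym/eqP; rewrite (negbTE (cycle_page_succ_neq aN km)).
- by rewrite cyc_succ2_neq // => /eqP; rewrite (negbTE (cycle_page_succ_neq aN jm)).
- by move=> _; apply: cyc_succ_inj.
Qed.

Lemma edge_page_match a i b j c k : a < N -> b < N -> c < N ->
  i <= 2 * m -> j <= 2 * m -> k <= 2 * m ->
  adj a i b j -> adj a i c k -> edge_page a i b j = edge_page a i c k -> b = c /\ j = k.
Proof.
move=> aN bN cN im jm km; rewrite /adj /edge_page.
have cyc_neq x y : (y == cyc_succ x) || (x == cyc_succ y) -> x <= 2 * m -> y <= 2 * m ->
    (x == y) = false.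
  by case/orP=> /eqP-> xm ym; rewrite ?cyc_succ_neq // eq_sym cyc_succ_neq.
case/orP=> [/andP[/eqP <- ij] | /andP[/eqP <- ab]];
  case/orP=> [/andP[/eqP <- ik] | /andP[/eqP <- ac]];
  rewrite ?(cyc_neq i j) ?(cyc_neq i k) ?eqxx //.
- by move/(cycle_page_match aN jm km ij ik).
- by move/eqP; rewrite eq_sym (negbTE (clique_page_neq_incident _ _ _ (cycle_edge_incident ij))) //;
    rewrite /cycle_edge; case: ifP.
- by move/eqP; rewrite (negbTE (clique_page_neq_incident _ _ _ (cycle_edge_incident ik))) //;
    rewrite /cycle_edge; case: ifP.
- have MN : N <= clique_mod i by rewrite /clique_mod; case: ifP.
  by move/clique_page_eq_mod/eqP; rewrite eqn_modDl_small; lia.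
Qed.

Local Notation clique_cycle := (cart_rel (@complete_rel N) (@cycle_rel (2 * m + 1))).

Lemma clique_cycle_adj (u v : 'I_N * 'I_(2 * m + 1)) :
  clique_cycle u v = adj u.1 u.2 v.1 v.2.
Proof. by []. Qed.

Lemma ord_cycle_le (i : 'I_(2 * m + 1)) : i <= 2 * m.
Proof. by rewrite -ltnS -[(2 * m).+1]addn1. Qed.

Lemma clique_cycle_sym : symmetric clique_cycle.
Proof. by move=> u v; rewrite !clique_cycle_adj /adj; lia. Qed.

Lemma clique_cycle_irr : irreflexive clique_cycle.
Proof. by move=> u; rewrite clique_cycle_adj /adj !eqxx orbb cyc_succ_neq // ord_cycle_le. Qed.

Lemma clique_cycle_mbe : has_mbe clique_cycle N.+2.
Proof.
pose pg (u v : 'I_N * 'I_(2 * m + 1)) : 'I_N.+2 := inord (edge_page u.1 u.2 v.1 v.2).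
have pgE u v : pg u v = edge_page u.1 u.2 v.1 v.2 :> nat by rewrite /pg inordK // edge_page_lt.
exists (fun u : 'I_N * 'I_(2 * m + 1) => spine_pos u.1 u.2), pg.
split; [|split; [|split]].
- move=> [a i] [b j] /= /(spine_pos_inj (ltn_ord a) (ltn_ord b)) [ab ij].
  by congr pair; apply: val_inj.
- by move=> u v euv; rewrite /pg edge_page_sym ?ord_cycle_le.
- move=> [a i] [b j] [c k] [d l] euv exy /(congr1 (@nat_of_ord _)).
  rewrite !pgE /= => pq [ac cb bd].
  apply: (spine_edge_noncrossing _ _ pq ac cb bd);
    apply: adj_spine_edge; rewrite ?ord_cycle_le //; lia.
- move=> [a i] [b j] [c k] euv euw /(congr1 (@nat_of_ord _)); rewrite !pgE /=.
  case/edge_page_match; rewrite ?ord_cycle_le // => bc jk.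
  by congr pair; apply: val_inj.
Qed.

Lemma deg_clique_cycle v : deg clique_cycle v = N.+1.
Proof.
case: v => a i; have im := ord_cycle_le i.
have ord_lt x : x <= 2 * m -> x < 2 * m + 1 by rewrite addn1.
have succ_le : cyc_succ i <= 2 * m by rewrite cyc_succ_eq //; case: ifP; lia.
have pred_le : (if i == 0 :> nat then 2 * m else i.-1) <= 2 * m by case: ifP; lia.
pose s := Ordinal (ord_lt _ succ_le); pose p := Ordinal (ord_lt _ pred_le).
have sp : s != p by rewrite -val_eqE /= cyc_succ_eq //; do ![case: ifP => /eqP ?]; lia.
rewrite /deg; have -> : [set w | clique_cycle (a, i) w] =
    setX [set a] [set s; p] :|: setX [set~ a] [set i].
  apply/setP => -[b j]; have jm := ord_cycle_le j.
  rewrite !inE clique_cycle_adj /adj /= -!val_eqE /= !cyc_succ_eq //.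
  by do ![case: ifP => /eqP ?]; lia.
rewrite cardsU !cardsX !cards1 cards2 sp cardsC1 card_ord.
suff -> : setX [set a] [set s; p] :&: setX [set~ a] [set i] = set0 by rewrite cards0 /=; lia.
by apply/setP => -[b j]; rewrite !inE; case: (b == a); rewrite /= ?andbF.
Qed.

Lemma max_deg_clique_cycle : max_deg clique_cycle = N.+1.
Proof.
have i0 : 0 < 2 * m + 1 by rewrite addn1.
exact: max_deg_regular (Ordinal N_gt0, Ordinal i0) deg_clique_cycle.
Qed.

Lemma clique_cycle_mbe_ge k : 2 < N -> has_mbe clique_cycle k -> N.+2 <= k.
Proof.
move=> N_gt2 mbe_k; have i0 : 0 < 2 * m + 1 by rewrite addn1.
pose v a (a_lt : a < N) := (Ordinal a_lt, Ordinal i0).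
have := mbe_deg_le mbe_k (v 0 N_gt0).
rewrite deg_clique_cycle leq_eqVlt => /orP[/eqP k_eq | //]; subst k.
have N_gt1 : 1 < N by lia.
exfalso; apply: (regular_mbe_triangle_free clique_cycle_sym clique_cycle_irr deg_clique_cycle mbe_k
  (x := v 0 N_gt0) (y := v 1 N_gt1) (z := v 2 N_gt2)); by rewrite clique_cycle_adj.
Qed.

End CliqueCycle.

Theorem lemma2p4 (n m : nat) (hn : 2 <= n) (hm : 1 <= m) :
  let e := cart_rel (@complete_rel (2 * n)) (@cycle_rel (2 * m + 1)) in
  is_mbt e (max_deg e + 1) /\ max_deg e + 1 = 2 * n + 2.
Proof.
have N_gt2 : 2 < 2 * n by lia.
have N_gt0 := ltnW (ltnW N_gt2).
rewrite /= (max_deg_clique_cycle N_gt0 hm) [_.+1 + 1]addn1; split; last by lia.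
split; first exact: clique_cycle_mbe N_gt0 hm.
by move=> k; apply: clique_cycle_mbe_ge N_gt0 hm k N_gt2.
Qed.
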